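(* Let $n\ge1$ be an integer and $\beta>0$, $J>0$, $H\in\mathbb{R}$. Let $P=S_3(123,321)=\{132,213,231,312\}\subset S_3$. For $\pi\in S_3$ let $\mathrm{CDdes}(\pi)=\mathrm{des}(\pi)+\mathrm{des}(\pi^{-1})$, where $\mathrm{des}(\pi)$ is the number of $i\in\{1,2\}$ with $\pi(i)>\pi(i+1)$; put $\phi(\alpha,\sigma)=1-\tfrac12\mathrm{CDdes}(\alpha^{-1}\sigma)$ and $\phi(\pi)=1-\tfrac12\mathrm{CDdes}(\pi)$. For $\vec\pi=(\pi^{(1)},\ldots,\pi^{(n)})\in P^n$ with $\pi^{(n+1)}:=\pi^{(1)}$, let $\mathcal{H}(\vec\pi)=-J\sum_{i=1}^n\phi(\pi^{(i)},\pi^{(i+1)})-H\sum_{i=1}^n\phi(\pi^{(i)})$ and $Z_n(\beta)=\sum_{\vec\pi\in P^n}\exp(-\beta\mathcal{H}(\vec\pi))$. Then $$Z_n(\beta)=e^{\beta Jn}\left(2(1-e^{-\beta J})^{n}(1+e^{-\beta J})^{n}+(1-e^{-\beta J})^{2n}+(1+e^{-\beta J})^{2n}\right),$$ and the free energy $f(\beta):=-\lim_{n\to\infty}\frac{1}{\beta n}\ln Z_n(\beta)$ equals $$f(\beta)=-J-\frac{2}{\beta}\ln\left(1+e^{-\beta J}\right).$$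
   Context: Permutations of $\{1,2,3\}$ are written in one-line notation $\pi(1)\pi(2)\pi(3)$ and composed as functions, $(\alpha^{-1}\sigma)(x)=\alpha^{-1}(\sigma(x))$. This is the 1D 3-permaspin model on a ring of $n$ sites with permaspins restricted to $P$, in an external field $H$. *)

From HB Require Import structures.
From mathcomp Require Import all_boot all_order all_algebra all_fingroup.
From mathcomp Require Import all_classical all_reals all_analysis.
Set Implicit Arguments. Unset Strict Implicit. Unset Printing Implicit Defensive.
Import Order.TTheory GRing.Theory Num.Theory.
Local Open Scope ring_scope.

(* Permutations of {1,2,3} are represented as {perm 'I_3} (0-indexed). *)
Notation S3 := {perm 'I_3}.

Definition i0 : 'I_3 := @Ordinal 3 0 isT.
Definition i1 : 'I_3 := @Ordinal 3 1 isT.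
Definition i2 : 'I_3 := @Ordinal 3 2 isT.

Definition des (p : S3) : nat :=
  ((p i1 < p i0)%N : nat) + ((p i2 < p i1)%N : nat).

Definition CDdes (p : S3) : nat := (des p + des (p^-1)%g)%N.

(* composition as functions: (comp f g) x = f (g x).  In mathcomp,
   (g * f)%g x = f (g x). *)
Definition pcomp (f g : S3) : S3 := (g * f)%g.

Definition phi2 {R : realType} (a s : S3) : R :=
  1 - (CDdes (pcomp (a^-1)%g s))%:R / 2.
Definition phi1 {R : realType} (p : S3) : R := 1 - (CDdes p)%:R / 2.

(* P = S_3(123,321): permutations of [3] containing neither the pattern
   123 (increasing) nor 321 (decreasing); in S_3 this means p is neither
   the increasing nor the decreasing one-line word. *)
Definition inP (p : S3) : bool :=
  ~~ ((p i0 < p i1)%N && (p i1 < p i2)%N) &&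
  ~~ ((p i1 < p i0)%N && (p i2 < p i1)%N).

Definition Ham {R : realType} (J H : R) (n : nat) (v : {ffun 'I_n -> S3}) : R :=
  - J * (\sum_(i < n) phi2 (v i) (v (ordS i)))
  - H * (\sum_(i < n) phi1 (v i)).

Definition Zn {R : realType} (J H beta : R) (n : nat) : R :=
  \sum_(v : {ffun 'I_n -> S3} | [forall i, inP (v i)])
     expR (- beta * Ham J H v).

(* Label the four permutations of P by bool * bool.  On P every CDdes equals 2,
   so the field term phi(pi) vanishes, and CDdes (alpha^-1 sigma) is twice the
   Hamming distance d of the labels; hence exp (-beta H) is e^(beta J n) times
   the product of x^d(a_i, a_(i+1)) around the ring, x = e^(-beta J).  The
   characters of (Z/2)^2 diagonalise the kernel x^d, with eigenvalues
   (1 +- x)(1 +- x), so the ring sum is the sum of their n-th powers,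
   ((1 + x)^n + (1 - x)^n)^2: two independent Ising rings.  Since
   0 < 1 - x < 1 + x, (1/n) ln Z_n tends to beta J + 2 ln (1 + x). *)

From Pilot Require Import Defs.
From HB Require Import structures.
From mathcomp Require Import all_boot all_order all_algebra all_fingroup.
From mathcomp Require Import all_classical all_reals all_analysis.
From mathcomp Require Import ring lra.
Set Implicit Arguments. Unset Strict Implicit. Unset Printing Implicit Defensive.
Import Order.TTheory GRing.Theory Num.Theory.
Import numFieldNormedType.Exports.
Local Open Scope classical_set_scope.
Local Open Scope ring_scope.

Definition cycle_sum {R : pzSemiRingType} {S : finType} (w : S -> S -> R) (n : nat) : R :=
  \sum_(u : {ffun 'I_n -> S}) \prod_(i < n) w (u i) (u (ordS i)).

Lemma cyclically_constant (T : Type) n (m : 'I_n.+1 -> T) :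
  (forall i, m i = m (ord_pred i)) -> forall i, m i = m ord0.
Proof.
move=> m_pred [i lt_i_n]; elim: i lt_i_n => [|i IHi] lt_i_n; first by congr m; apply: val_inj.
rewrite -(IHi (ltnW lt_i_n)) m_pred; congr m; apply: val_inj.
by rewrite /= modnDr modn_small // ltnW.
Qed.

Section SpectralCycleSum.
Variables (F : fieldType) (S I : finType) (chi : I -> S -> F) (lam : I -> F) (c : F).
Hypothesis c_neq0 : c != 0.
Hypothesis chi_orth : forall k l, \sum_s chi k s * chi l s = (k == l)%:R * c.

Lemma cycle_sum_modes n (m : {ffun 'I_n.+1 -> I}) :
  \sum_(u : {ffun 'I_n.+1 -> S}) \prod_i (chi (m i) (u i) * chi (m i) (u (ordS i)))
  = (m == [ffun=> m ord0])%:R * c ^+ n.+1.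
Proof.
have shift u : \prod_i chi (m i) (u (ordS i)) = \prod_i chi (m (ord_pred i)) (u i).
  by rewrite [RHS](reindex_inj (@ordS_inj _)); apply: eq_bigr => i _; rewrite ordSK.
under eq_bigr => u _ do rewrite big_split /= shift -big_split /=.
rewrite -(bigA_distr_bigA (fun i s => chi (m i) s * chi (m (ord_pred i)) s)) /=.
under eq_bigr => i _ do rewrite chi_orth.
rewrite big_split /= prodr_const card_ord; congr (_ * _).
have [m_const | m_nconst] := eqVneq m [ffun=> m ord0].
  by rewrite big1 // => i _; rewrite m_const !ffunE eqxx.
suff [i m_pred_i] : exists i, m i != m (ord_pred i).
  by rewrite (bigD1 i) //= (negbTE m_pred_i) mul0r.
apply/existsP; apply: contraNT m_nconst => /existsPn m_pred.
apply/eqP/ffunP => i; rewrite ffunE; apply: cyclically_constant => j.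
by apply/eqP; move/negPn: (m_pred j).
Qed.

Lemma cycle_sum_spectral n (w : S -> S -> F) :
  (forall s t, w s t = c^-1 * \sum_k lam k * chi k s * chi k t) ->
  cycle_sum w n.+1 = \sum_k lam k ^+ n.+1.
Proof.
move=> w_spec; rewrite /cycle_sum.
have w_modes s t : w s t = \sum_k c^-1 * lam k * (chi k s * chi k t).
  by rewrite w_spec mulr_sumr; apply: eq_bigr => k _; rewrite !mulrA.
under eq_bigr => u _ do rewrite (eq_bigr _ (fun i _ => w_modes _ _)).
under eq_bigr => u _ do rewrite bigA_distr_bigA /=.
rewrite exchange_big /=.
under eq_bigr => m _ do rewrite (eq_bigr _ (fun u _ => big_split _ _ _ _ _)) /=.
under eq_bigr => m _ do rewrite -big_distrr /= cycle_sum_modes mulrCA.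
under eq_bigr => m _ do rewrite mulr_natl mulrb.
rewrite -big_mkcond (reindex_onto (fun k => [ffun=> k]) (fun m => m ord0)) /=; last first.
  by move=> m /eqP.
apply: eq_big => [k | k _]; first by rewrite !ffunE !eqxx.
under eq_bigr => i _ do rewrite ffunE.
by rewrite prodr_const card_ord -exprMn mulrAC mulVf ?mul1r.
Qed.

End SpectralCycleSum.

Definition hamming (a b : bool * bool) : nat := (a.1 != b.1) + (a.2 != b.2).

Section HammingKernel.
Variables (R : numFieldType) (x : R).

Definition klein_char (k a : bool * bool) : R := (-1) ^+ (k.1 && a.1) * (-1) ^+ (k.2 && a.2).

Definition ising_eigen (b : bool) : R := if b then 1 - x else 1 + x.

Lemma sum_bool_pair (G : bool * bool -> R) :
  \sum_k G k = G (true, true) + G (true, false) + (G (false, true) + G (false, false)).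
Proof.
rewrite (eq_bigr (fun k => G (k.1, k.2))); last by case.
by rewrite -(pair_bigA _ (fun a b => G (a, b))) /= !big_bool.
Qed.

Lemma klein_char_orth k l : \sum_a klein_char k a * klein_char l a = (k == l)%:R * 4.
Proof.
rewrite sum_bool_pair /klein_char.
by case: k l => [[] []] [[] []]; rewrite /= ?expr0 ?expr1; ring.
Qed.

Lemma hamming_kernel_spectral a b :
  x ^+ hamming a b =
  4^-1 * \sum_k ising_eigen k.1 * ising_eigen k.2 * klein_char k a * klein_char k b.
Proof.
apply: (@mulfI _ 4); first by rewrite pnatr_eq0.
rewrite mulrA mulfV ?pnatr_eq0 // mul1r sum_bool_pair /ising_eigen /klein_char /=.
by case: a b => [[] []] [[] []]; rewrite /hamming /= ?expr0 ?expr1; ring.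
Qed.

Lemma cycle_sum_hamming n :
  cycle_sum (fun a b => x ^+ hamming a b) n.+1 = ((1 + x) ^+ n.+1 + (1 - x) ^+ n.+1) ^+ 2.
Proof.
rewrite (cycle_sum_spectral _ klein_char_orth _ hamming_kernel_spectral) ?pnatr_eq0 //.
rewrite sum_bool_pair /ising_eigen /= !exprMn.
by set A := (1 - x) ^+ n.+1; set B := (1 + x) ^+ n.+1; ring.
Qed.

End HammingKernel.

Lemma ord3_ind (P : 'I_3 -> Prop) : P i0 -> P i1 -> P i2 -> forall i, P i.
Proof.
move=> P0 P1 P2 [[|[|[|i]]] lt_i3] //.
- by have -> : Ordinal lt_i3 = i0 by apply: val_inj.
- by have -> : Ordinal lt_i3 = i1 by apply: val_inj.
- by have -> : Ordinal lt_i3 = i2 by apply: val_inj.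
Qed.

Definition word3 (a b c : 'I_3) (i : 'I_3) : 'I_3 :=
  if i == i0 then a else if i == i1 then b else c.

(* The words 132, 213, 312, 231 of P, labelled so that CDdes (alpha^-1 sigma) is
   twice the Hamming distance of the labels. *)
Definition spin_word (k : bool * bool) : 'I_3 -> 'I_3 :=
  match k with
  | (false, false) => word3 i0 i2 i1
  | (false, true) => word3 i1 i0 i2
  | (true, false) => word3 i2 i0 i1
  | (true, true) => word3 i1 i2 i0
  end.

Lemma spin_word_inj k : injective (spin_word k).
Proof.
by move=> i j; case: k => [[] []]; elim/ord3_ind: i; elim/ord3_ind: j => // /(congr1 val).
Qed.

Definition perm_of_spin (k : bool * bool) : S3 := perm (@spin_word_inj k).

Definition spin_of_perm (p : S3) : bool * bool :=
  if p i0 == i0 then (false, false)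
  else if p i0 == i2 then (true, false)
  else if p i1 == i2 then (true, true) else (false, true).

Lemma perm3V (p : S3) i :
  (p^-1)%g i = if p i0 == i then i0 else if p i1 == i then i1 else i2.
Proof.
have := permKV p i; move: ((p^-1)%g i) => j <-.
by elim/ord3_ind: j; rewrite !(inj_eq perm_inj).
Qed.

Lemma inP_perm_of_spin k : inP (perm_of_spin k).
Proof. by rewrite /inP !permE; case: k => [[] []]. Qed.

Lemma perm_of_spinK : cancel perm_of_spin spin_of_perm.
Proof. by move=> k; rewrite /spin_of_perm !permE; case: k => [[] []]. Qed.

Lemma spin_of_permK p : inP p -> perm_of_spin (spin_of_perm p) = p.
Proof.
move=> Pp; apply/permP => i; rewrite permE.
have p01 : p i0 != p i1 by rewrite (inj_eq perm_inj).
have p02 : p i0 != p i2 by rewrite (inj_eq perm_inj).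
have p12 : p i1 != p i2 by rewrite (inj_eq perm_inj).
move: Pp p01 p02 p12; rewrite /inP /spin_of_perm.
elim/ord3_ind: i; move: (p i0) (p i1) (p i2) => a b c;
  by elim/ord3_ind: a; elim/ord3_ind: b; elim/ord3_ind: c.
Qed.

Lemma CDdes_perm_of_spin k : CDdes (perm_of_spin k) = 2%N.
Proof. by rewrite /CDdes /des !perm3V !permE; case: k => [[] []]. Qed.

Lemma CDdes_pcomp_perm_of_spin a b :
  CDdes (Defs.pcomp (perm_of_spin a)^-1%g (perm_of_spin b)) = (2 * hamming a b)%N.
Proof.
rewrite /CDdes /Defs.pcomp invMg invgK /des !permM !perm3V !permE.
by case: a b => [[] []] [[] []].
Qed.

Section PartitionFunction.
Variables (R : realType) (J H beta : R).

Lemma phi1_perm_of_spin k : phi1 (perm_of_spin k) = 0 :> R.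
Proof. by rewrite /phi1 CDdes_perm_of_spin mulfV ?subrr ?pnatr_eq0. Qed.

Lemma phi2_perm_of_spin a b :
  phi2 (perm_of_spin a) (perm_of_spin b) = 1 - (hamming a b)%:R :> R.
Proof. by rewrite /phi2 CDdes_pcomp_perm_of_spin natrM (mulrC 2) mulfK ?pnatr_eq0. Qed.

Lemma Zn_cycle_sum n :
  Zn J H beta n =
  expR (beta * J) ^+ n * cycle_sum (fun a b => expR (- beta * J) ^+ hamming a b) n.
Proof.
pose lift (u : {ffun 'I_n -> bool * bool}) := [ffun i => perm_of_spin (u i)].
rewrite /Zn (reindex lift); last first.
  exists (fun v : {ffun 'I_n -> S3} => [ffun i => spin_of_perm (v i)]) => [u _ | v].
    by apply/ffunP => i; rewrite !ffunE perm_of_spinK.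
  rewrite inE => /forallP Pv; apply/ffunP => i.
  by rewrite !ffunE spin_of_permK.
rewrite (eq_bigl xpredT) => [|u]; last first.
  by apply/forallP => i; rewrite ffunE inP_perm_of_spin.
rewrite /cycle_sum mulr_sumr; apply: eq_bigr => u _.
rewrite /Ham [X in H * X]big1 => [|i _]; last by rewrite ffunE phi1_perm_of_spin.
rewrite mulr0 subr0 mulrA mulrNN mulr_sumr expR_sum.
rewrite (eq_bigr (fun i => expR (beta * J) * expR (- beta * J) ^+ hamming (u i) (u (ordS i)))).
  by rewrite big_split /= prodr_const card_ord.
move=> i _; rewrite !ffunE phi2_perm_of_spin -expRM_natr -expRD.
by congr expR; ring.
Qed.

Lemma Zn_closed_form n :
  Zn J H beta n.+1 =
  expR (beta * J) ^+ n.+1 *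
    ((1 + expR (- beta * J)) ^+ n.+1 + (1 - expR (- beta * J)) ^+ n.+1) ^+ 2.
Proof. by rewrite Zn_cycle_sum cycle_sum_hamming. Qed.

End PartitionFunction.

Lemma ln_sum_powers_cvg (R : realType) (a b : R) : 0 < a -> `|b| < a ->
  (fun n => ln (a ^+ n.+1 + b ^+ n.+1) / n.+1%:R) @ \oo --> ln a.
Proof.
move=> a_gt0 b_lt_a; set q := b / a.
have q_lt1 : `|q| < 1 by rewrite normrM normfV (gtr0_norm a_gt0) ltr_pdivrMr ?mul1r.
have powers_gt0 n : 0 < 1 + q ^+ n.+1.
  have := exprn_ilt1 n.+1 (normr_ge0 q) q_lt1; rewrite -normrX ltr_norml.
  by case/andP => ? _; lra.
have ln_split n : ln (a ^+ n.+1 + b ^+ n.+1) / n.+1%:R = ln a + ln (1 + q ^+ n.+1) * harmonic n.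
  have -> : a ^+ n.+1 + b ^+ n.+1 = a ^+ n.+1 * (1 + q ^+ n.+1).
    by rewrite mulrDr mulr1 -exprMn /q mulrCA divff ?gt_eqF // mulr1.
  rewrite lnM ?posrE ?exprn_gt0 // lnXn // -(mulr_natr (ln a)) [harmonic n]/=.
  by field; rewrite nat1r pnatr_eq0.
have q_pow_cvg : (fun n => q ^+ n.+1) @ \oo --> 0.
  by have := cvg_expr q_lt1; rewrite -cvg_shiftS.
have one_q_cvg : (fun n => 1 + q ^+ n.+1) @ \oo --> (1 : R).
  by rewrite -[X in _ --> X]addr0; apply: cvgD => //; exact: cvg_cst.
have ln_cvg : (fun n => ln (1 + q ^+ n.+1)) @ \oo --> (0 : R).
  by rewrite -ln1; exact: (continuous_cvg _ (continuous_ln ltr01) one_q_cvg).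
have : (fun n => ln a + ln (1 + q ^+ n.+1) * harmonic n) @ \oo --> ln a + 0 * 0.
  by apply: cvgD; [exact: cvg_cst | apply: cvgM => //; exact: cvg_harmonic].
by rewrite mulr0 addr0 -(eq_cvg _ _ ln_split).
Qed.

Theorem theorem3 (R : realType) (beta J H : R) (hbeta : 0 < beta) (hJ : 0 < J) :
  (forall n : nat, (1 <= n)%N ->
     Zn J H beta n =
     expR (beta * J * n%:R) *
       (2 * (1 - expR (- beta * J)) ^+ n * (1 + expR (- beta * J)) ^+ n
        + (1 - expR (- beta * J)) ^+ (2 * n)
        + (1 + expR (- beta * J)) ^+ (2 * n)))
  /\
  (fun n : nat => - (ln (Zn J H beta n) / (beta * n%:R))) @ \oo -->
     (- J - 2 / beta * ln (1 + expR (- beta * J))).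
Proof.
set x := expR (- beta * J).
have x_gt0 : 0 < x by apply: expR_gt0.
have x_lt1 : x < 1 by rewrite expR_lt1 mulNr oppr_lt0 mulr_gt0.
have x_plus_gt0 : 0 < 1 + x by rewrite addr_gt0.
have x_minus_gt0 : 0 < 1 - x by rewrite subr_gt0.
split=> [[//|n] _|].
  rewrite Zn_closed_form -/x expRM_natr mulnC !exprM.
  by congr (_ * _); move: ((1 - x) ^+ n.+1) ((1 + x) ^+ n.+1) => A B; ring.
have free_energy_n n : - (ln (Zn J H beta n.+1) / (beta * n.+1%:R)) =
    - J - 2 / beta * (ln ((1 + x) ^+ n.+1 + (1 - x) ^+ n.+1) / n.+1%:R).
  have ising_gt0 : 0 < (1 + x) ^+ n.+1 + (1 - x) ^+ n.+1.
    by rewrite addr_gt0 ?exprn_gt0.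
  have eJ_gt0 : 0 < expR (beta * J) := expR_gt0 _.
  rewrite Zn_closed_form -/x lnM ?posrE ?exprn_gt0 // !lnXn // expRK.
  rewrite -(mulr_natr (beta * J)) -(mulr_natr (ln _)).
  by field; rewrite nat1r pnatr_eq0 (gt_eqF hbeta).
rewrite -cvg_shiftS (eq_cvg _ _ free_energy_n).
apply: cvgB; first exact: cvg_cst.
apply: cvgMr; apply: ln_sum_powers_cvg => //.
by rewrite gtr0_norm // ltrD2l; lra.
Qed.
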